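(* Let $\lambda_1(\varepsilon),\ldots,\lambda_n(\varepsilon)$ be real functions with $\lambda_k(\varepsilon)=\varepsilon^{L_k}(\widetilde\lambda_k+\mathcal{O}(\varepsilon))$ as $\varepsilon\to0$, for integers $0\le L_1\le\cdots\le L_n$, and let $e_j(\varepsilon)=e_j(\lambda_1(\varepsilon),\ldots,\lambda_n(\varepsilon))=\varepsilon^{L_1+\cdots+L_j}(\widetilde e_j+\mathcal{O}(\varepsilon))$. Set $L_0=-1$ and $L_{n+1}=+\infty$. Suppose that for some $s\ge0$ and $1\le m\le n-s$, \[L_s<L_{s+1}=\cdots=L_{s+m}<L_{s+m+1}.\] Then for $1\le k\le m$, \[\widetilde e_{s+k}=\begin{cases}e_k(\widetilde\lambda_{s+1},\ldots,\widetilde\lambda_{s+m}),& s=0,\\ \widetilde\lambda_1\cdots\widetilde\lambda_s\,e_k(\widetilde\lambda_{s+1},\ldots,\widetilde\lambda_{s+m})=\widetilde e_s\,e_k(\widetilde\lambda_{s+1},\ldots,\widetilde\lambda_{s+m}),& s>0.\end{cases}\] In particular, if $s>1$ and $\widetilde e_s\ne0$, then $e_k(\widetilde\lambda_{s+1},\ldots,\widetilde\lambda_{s+m})=\widetilde e_{s+k}/\widetilde e_s$ for $1\le k\le m$, hence $\widetilde\lambda_{s+1},\ldots,\widetilde\lambda_{s+m}$ are the roots of the polynomial $q(\lambda)=\sum_{j=0}^m(-1)^j\widetilde e_{s+j}\lambda^{m-j}$.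
   Context: The $k$-th elementary symmetric polynomial is $e_k(\mu_1,\ldots,\mu_m)=\sum_{\mathcal{Y}\subset\{1,\ldots,m\},\,\#\mathcal{Y}=k}\prod_{i\in\mathcal{Y}}\mu_i$. The constants $\widetilde e_j$ denote the main-term coefficients of $e_j(\varepsilon)$ as displayed. *)

From HB Require Import structures.
From mathcomp Require Import all_boot all_order all_algebra.
From mathcomp Require Import reals.
Set Implicit Arguments. Unset Strict Implicit. Unset Printing Implicit Defensive.
Import Order.TTheory GRing.Theory Num.Theory.
Local Open Scope ring_scope.

Definition elsym {R : comPzRingType} (n : nat) (mu : nat -> R) (k : nat) : R :=
  \sum_(Y : {set 'I_n} | #|Y| == k) \prod_(i in Y) mu (val i).+1.

(* f(eps) = eps^L (c + O(eps)) as eps -> 0, i.e. there are C and delta > 0 with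
   |f eps - eps^L c| <= C |eps|^(L+1) for 0 < |eps| < delta. *)
Definition has_expansion {R : realType} (f : R -> R) (L : nat) (c : R) : Prop :=
  exists C delta : R, 0 < delta /\
    forall eps : R, 0 < `|eps| < delta ->
      `|f eps - eps ^+ L * c| <= C * `|eps| ^+ L.+1.

From HB Require Import structures.
From mathcomp Require Import all_boot all_order all_algebra.
From mathcomp Require Import reals.
From mathcomp Require Import ring lra zify.
Set Implicit Arguments. Unset Strict Implicit. Unset Printing Implicit Defensive.
Import Order.TTheory GRing.Theory Num.Theory.
Local Open Scope ring_scope.

(* Write e_j^(N) for e_j(lambda_1, ..., lambda_N), so that
   e_(j+1)^(N+1) = e_(j+1)^(N) + lambda_(N+1) e_j^(N), and e_j^(N) = O(eps^(L_1+...+L_j))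
   because L is nondecreasing.  Appending lambda_(N+1) leaves the leading term of e_j
   unchanged when L_(N+1) > L_j, while for L_(N+1) = L_(j+1) both summands contribute
   at the same order.  Inside the block s+1, ..., s+m all orders coincide, so the leading
   coefficients follow the recursion of the elementary symmetric polynomials and equal
   lambda~_1 ... lambda~_s e_k(lambda~_(s+1), ..., lambda~_(s+m)); the later lambdas have
   strictly larger orders and do not change them.  Uniqueness of leading coefficients
   identifies these with e~_(s+k), and the polynomial identity is Vieta's formula. *)

Lemma ord_max_notin_lift n (A : {set 'I_n}) : ord_max \notin lift ord_max @: A.
Proof. by apply/imsetP => -[i _ /eqP]; rewrite (negbTE (neq_lift _ _)). Qed.

Lemma big_set_ord_max (V : nmodType) n (P : pred {set 'I_n.+1}) (F : {set 'I_n.+1} -> V) :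
  \sum_(Y | P Y) F Y =
    \sum_(A : {set 'I_n} | P (lift ord_max @: A)) F (lift ord_max @: A)
  + \sum_(A : {set 'I_n} | P (ord_max |: lift ord_max @: A))
       F (ord_max |: lift ord_max @: A).
Proof.
pose up (A : {set 'I_n}) : {set 'I_n.+1} := lift ord_max @: A.
pose restr (Y : {set 'I_n.+1}) := [set i : 'I_n | lift ord_max i \in Y].
have lift_max_inj : injective (@lift n.+1 ord_max) by exact: lift_inj.
have restr_up A : restr (up A) = A by apply/setP => i; rewrite inE mem_imset.
have restr_upU A : restr (ord_max |: up A) = A.
  by apply/setP => i; rewrite !inE eq_sym (negbTE (neq_lift _ _)) mem_imset.
have up_restr (Y : {set 'I_n.+1}) : ord_max \notin Y -> up (restr Y) = Y.
  move=> maxY; apply/setP => x.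
  case: (unliftP ord_max x) => [i ->|->]; first by rewrite mem_imset // inE.
  by rewrite (negbTE maxY) (negbTE (ord_max_notin_lift _)).
have up_restrU (Y : {set 'I_n.+1}) : ord_max \in Y -> ord_max |: up (restr Y) = Y.
  move=> maxY; apply/setP => x; rewrite in_setU1.
  case: (unliftP ord_max x) => [i ->|->]; last by rewrite eqxx maxY.
  by rewrite eq_sym (negbTE (neq_lift _ _)) mem_imset // inE.
rewrite (bigID (fun Y : {set 'I_n.+1} => ord_max \in Y)) /= addrC; congr (_ + _).
- rewrite (reindex_onto up restr) => [|Y /andP[_]]; last exact: up_restr.
  by apply: eq_bigl => A; rewrite ord_max_notin_lift restr_up eqxx !andbT.
- rewrite (reindex_onto (fun A => ord_max |: up A) restr) => [|Y /andP[_]].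
    by apply: eq_bigl => A; rewrite setU11 restr_upU eqxx !andbT.
  exact: up_restrU.
Qed.

Section ElementarySymmetric.
Variable R : comPzRingType.
Implicit Types (mu : nat -> R).

Lemma elsym0 n mu : elsym n mu 0%N = 1.
Proof.
rewrite /elsym (eq_bigl (pred1 set0)) => [|Y]; last by rewrite cards_eq0.
by rewrite big_pred1_eq big_set0.
Qed.

Lemma elsym_eq0 n mu k : (n < k)%N -> elsym n mu k = 0.
Proof.
move=> ltnk; rewrite /elsym big_pred0 // => Y; apply/negbTE/eqP => cardY.
by move: (max_card Y); rewrite card_ord cardY leqNgt ltnk.
Qed.

Lemma elsymS n mu k :
  elsym n.+1 mu k.+1 = elsym n mu k.+1 + mu n.+1 * elsym n mu k.
Proof.
have lift_max_inj : injective (@lift n.+1 ord_max) by exact: lift_inj.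
have prod_lift (A : {set 'I_n}) :
    \prod_(i in lift ord_max @: A) mu (val i).+1 = \prod_(i in A) mu (val i).+1.
  by rewrite (big_imset _ (in2W lift_max_inj)); apply: eq_bigr => i _; rewrite [val _]lift_max.
rewrite /elsym big_set_ord_max mulr_sumr; congr (_ + _); apply: eq_big => A.
- by rewrite card_imset.
- by move=> _; rewrite prod_lift.
- by rewrite cardsU1 ord_max_notin_lift card_imset.
- by move=> _; rewrite big_setU1 ?ord_max_notin_lift //= prod_lift.
Qed.

End ElementarySymmetric.

Lemma prod_XsubC_elsym (R : comNzRingType) n (mu : nat -> R) :
  \prod_(i < n) ('X - (mu i.+1)%:P) =
  \sum_(k < n.+1) ((-1) ^+ k * elsym n mu k) *: 'X^(n - k).
Proof.
elim: n => [|n IH]; first by rewrite big_ord0 big_ord1 elsym0 mulr1 scale1r.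
rewrite big_ord_recr /= IH mulrBr.
set S := \sum_(k < n.+1) _.
rewrite [RHS]big_ord_recl /= elsym0 mulr1 scale1r subn0.
under [X in _ = _ + X]eq_bigr => k _ do
  rewrite /bump /= add1n elsymS subSS mulrDr scalerDl.
rewrite big_split /= addrA; congr (_ + _).
  rewrite /S big_ord_recl /= elsym0 mulr1 scale1r subn0 mulrDl -exprSr mulr_suml.
  congr (_ + _); rewrite [RHS]big_ord_recr /= elsym_eq0 // mulr0 scale0r addr0.
  by apply: eq_bigr => k _; rewrite /bump /= add1n -scalerAl -exprSr subnSK.
rewrite /S mulr_suml -sumrN; apply: eq_bigr => k _.
by rewrite mulrC mul_polyC scalerA -scaleNr exprS; congr (_ *: _); ring.
Qed.

Section Expansions.
Variable R : realType.
Implicit Types (f g : R -> R) (c d : R).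

Definition bigO_pow f (a : nat) : Prop :=
  exists C delta : R, 0 < delta /\
    forall eps : R, 0 < `|eps| < delta -> `|f eps| <= C * `|eps| ^+ a.

Lemma eq_bigO_pow f g a : f =1 g -> bigO_pow f a -> bigO_pow g a.
Proof. by move=> fg [C [d [d0 H]]]; exists C, d; split=> // e; rewrite -fg; apply: H. Qed.

Lemma bigO_pow0 a : bigO_pow (fun=> 0) a.
Proof. by exists 0, 1; split=> // e _; rewrite normr0 mul0r. Qed.

Lemma bigO_pow_monomial a c : bigO_pow (fun e => e ^+ a * c) a.
Proof. by exists `|c|, 1; split=> // e _; rewrite normrM normrX mulrC. Qed.

Lemma bigO_powN f a : bigO_pow f a -> bigO_pow (fun e => - f e) a.
Proof. by move=> [C [d [d0 H]]]; exists C, d; split=> // e he; rewrite normrN H. Qed.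

Lemma bigO_powD f g a :
  bigO_pow f a -> bigO_pow g a -> bigO_pow (fun e => f e + g e) a.
Proof.
move=> [C1 [d1 [d10 H1]]] [C2 [d2 [d20 H2]]].
exists (C1 + C2), (Num.min d1 d2); split; first by rewrite lt_min d10 d20.
move=> e /andP[e0]; rewrite lt_min => /andP[e1 e2].
rewrite mulrDl (le_trans (ler_normD _ _)) // lerD ?H1 ?H2 //; exact/andP.
Qed.

Lemma bigO_powM f g a b :
  bigO_pow f a -> bigO_pow g b -> bigO_pow (fun e => f e * g e) (a + b).
Proof.
move=> [C1 [d1 [d10 H1]]] [C2 [d2 [d20 H2]]].
exists (C1 * C2), (Num.min d1 d2); split; first by rewrite lt_min d10 d20.
move=> e /andP[e0]; rewrite lt_min => /andP[e1 e2].
by rewrite normrM exprD mulrACA ler_pM ?H1 ?H2 //; apply/andP.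
Qed.

Lemma bigO_powW f a b : (a <= b)%N -> bigO_pow f b -> bigO_pow f a.
Proof.
move=> ab [C [d [d0 H]]].
exists `|C|, (Num.min d 1); split; first by rewrite lt_min d0 ltr01.
move=> e /andP[e0]; rewrite lt_min => /andP[e1 e2].
rewrite (le_trans (H e _)) ?e0 // (le_trans (ler_norm _)) // normrM normrX normr_id.
by rewrite ler_wpM2l // ler_wiXn2l // ltW.
Qed.

Lemma bigO_pow_monomial_eq0 a c : bigO_pow (fun e => e ^+ a * c) a.+1 -> c = 0.
Proof.
move=> [C [d [d0 H]]]; apply/eqP/negPn/negP => c0.
have Cp : 0 < `|C| + 1 by apply: ltr_wpDl.
pose t := Num.min (d / 2) (`|c| / (`|C| + 1)).
have t0 : 0 < t by rewrite lt_min !divr_gt0 ?normr_gt0.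
have tc : t * (`|C| + 1) <= `|c| by rewrite -ler_pdivlMr // ge_min lexx orbT.
have td : t < d.
  have : t <= d / 2 by rewrite ge_min lexx.
  lra.
(* At [eps = t] the bound reads [|c| <= C t], whereas [|C| t < |c|]. *)
have /H : 0 < `|t| < d by rewrite gtr0_norm // t0 td.
rewrite normrM normrX gtr0_norm // exprS mulrA [X in _ <= X]mulrC ler_pM2l ?exprn_gt0 //.
have : C <= `|C| := ler_norm C.
nra.
Qed.

Lemma has_expansionE f a c :
  has_expansion f a c = bigO_pow (fun e => f e - e ^+ a * c) a.+1.
Proof. by []. Qed.

Lemma eq_has_expansion f g a c : f =1 g -> has_expansion f a c -> has_expansion g a c.
Proof. by rewrite !has_expansionE => fg; apply: eq_bigO_pow => e; rewrite fg. Qed.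

Lemma has_expansion_cst c : has_expansion (fun=> c) 0%N c.
Proof. by rewrite has_expansionE; apply: eq_bigO_pow (bigO_pow0 _) => e; rewrite mul1r subrr. Qed.

Lemma has_expansion0 f a : bigO_pow f a.+1 -> has_expansion f a 0.
Proof. by rewrite has_expansionE; apply: eq_bigO_pow => e; rewrite mulr0 subr0. Qed.

Lemma has_expansion_bigO f a c : has_expansion f a c -> bigO_pow f a.
Proof.
rewrite has_expansionE => /(bigO_powW (leqnSn a)) /bigO_powD /(_ (bigO_pow_monomial a c)).
by apply: eq_bigO_pow => e; rewrite subrK.
Qed.

Lemma has_expansionD f g a c d : has_expansion f a c -> has_expansion g a d ->
  has_expansion (fun e => f e + g e) a (c + d).
Proof.
rewrite !has_expansionE => /bigO_powD fD /fD.
by apply: eq_bigO_pow => e; rewrite mulrDr opprD addrACA.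
Qed.

Lemma has_expansionM f g a b c d : has_expansion f a c -> has_expansion g b d ->
  has_expansion (fun e => f e * g e) (a + b) (c * d).
Proof.
move=> fc gd; rewrite has_expansionE.
have := bigO_powM fc (has_expansion_bigO gd).
have := bigO_powM (bigO_pow_monomial a c) gd.
rewrite addSn addnS => /bigO_powD H /H{H}.
by apply: eq_bigO_pow => e; rewrite exprD; ring.
Qed.

Lemma has_expansion_unique f a c d : has_expansion f a c -> has_expansion f a d -> c = d.
Proof.
rewrite !has_expansionE => fc /bigO_powN /(bigO_powD fc) H.
apply/eqP; rewrite eq_sym -subr_eq0; apply/eqP/(bigO_pow_monomial_eq0 (a := a)).
by apply: eq_bigO_pow H => e; ring.
Qed.

End Expansions.

Section ElsymExpansions.
Variables (R : realType) (n : nat) (lam : nat -> R -> R) (L : nat -> nat) (lamt : nat -> R).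
Hypothesis L_mono :
  forall i j, (1 <= i)%N -> (i <= j)%N -> (j <= n)%N -> (L i <= L j)%N.
Hypothesis lam_expansion :
  forall k, (1 <= k <= n)%N -> has_expansion (lam k) (L k) (lamt k).

Local Notation e N j := (fun eps => elsym N (fun i => lam i eps) j).
Local Notation S j := (\sum_(1 <= i < j.+1) L i)%N.

Lemma bigO_elsym N j : (N <= n)%N -> bigO_pow (e N j) (S j).
Proof.
have e0 M : bigO_pow (e M 0) (S 0).
  rewrite big_geq //; apply: eq_bigO_pow (has_expansion_bigO (has_expansion_cst 1)).
  by move=> eps; rewrite elsym0.
elim: N j => [|N IH] [|j] Nn //.
  by apply: eq_bigO_pow (bigO_pow0 _ _) => eps; rewrite elsym_eq0.
apply: eq_bigO_pow (bigO_powD (IH _ (ltnW Nn)) _) => [eps|]; first by rewrite elsymS.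
have [Nj|jN] := ltnP N j.
  by apply: eq_bigO_pow (bigO_pow0 _ _) => eps; rewrite elsym_eq0 ?mulr0.
apply: bigO_powW (bigO_powM (has_expansion_bigO (lam_expansion _)) (IH _ (ltnW Nn))).
  by rewrite big_nat_recr //= addnC leq_add2r L_mono.
by rewrite Nn.
Qed.

Lemma expansion_elsym_step N j a b : (N < n)%N -> L N.+1 = L j.+1 ->
  has_expansion (e N j.+1) (S j.+1) a -> has_expansion (e N j) (S j) b ->
  has_expansion (e N.+1 j.+1) (S j.+1) (a + lamt N.+1 * b).
Proof.
move=> Nn LNj ea eb.
have lamN : has_expansion (lam N.+1) (L N.+1) (lamt N.+1) by apply: lam_expansion; rewrite Nn.
have := has_expansionM lamN eb.
rewrite LNj addnC -big_nat_recr //= => /(has_expansionD ea).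
by apply: eq_has_expansion => eps; rewrite elsymS.
Qed.

Lemma expansion_elsym_stable N j c : (N < n)%N -> j = 0%N \/ (L j < L N.+1)%N ->
  has_expansion (e N j) (S j) c -> has_expansion (e N.+1 j) (S j) c.
Proof.
case: j => [|j] Nn Lj; first by apply: eq_has_expansion => eps; rewrite !elsym0.
have {}Lj : (L j.+1 < L N.+1)%N by case: Lj.
have small : bigO_pow (fun eps => lam N.+1 eps * elsym N (fun i => lam i eps) j) (S j.+1).+1.
  apply: bigO_powW (bigO_powM (has_expansion_bigO (lam_expansion _)) (bigO_elsym j (ltnW Nn))).
    by rewrite big_nat_recr //=; lia.
  by rewrite Nn.
move=> /has_expansionD /(_ (has_expansion0 small)); rewrite addr0.
by apply: eq_has_expansion => eps; rewrite elsymS.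
Qed.

Lemma expansion_elsym_extend N d j c : (N + d <= n)%N ->
  j = 0%N \/ (L j < L N.+1)%N ->
  has_expansion (e N j) (S j) c -> has_expansion (e (N + d) j) (S j) c.
Proof.
move=> + Lj ec; elim: d => [|d IH]; first by rewrite addn0.
rewrite addnS => Ndn; apply: expansion_elsym_stable => //; last exact: IH (ltnW Ndn).
case: Lj => [|Lj]; [by left | right].
by apply: leq_trans Lj (L_mono _ _ _); rewrite ?ltnS ?leq_addr.
Qed.

Lemma expansion_elsym_diag N : (N <= n)%N ->
  has_expansion (e N N) (S N) (\prod_(1 <= i < N.+1) lamt i).
Proof.
elim: N => [_|N IH Nn].
  by rewrite !big_geq //; apply: eq_has_expansion (has_expansion_cst 1) => eps; rewrite elsym0.
have eN : has_expansion (e N N.+1) (S N.+1) 0.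
  by apply: has_expansion0; apply: eq_bigO_pow (bigO_pow0 _ _) => eps; rewrite elsym_eq0.
rewrite [X in has_expansion _ _ X]big_nat_recr //= mulrC -[X in has_expansion _ _ X]add0r.
exact: expansion_elsym_step eN (IH (ltnW Nn)).
Qed.

Section Block.
Variables s m : nat.
Hypothesis block_le : (s + m <= n)%N.
Hypothesis L_block_left : s = 0%N \/ (L s < L s.+1)%N.
Hypothesis L_block : forall i, (1 <= i <= m)%N -> L (s + i)%N = L s.+1.

Local Notation P := (\prod_(1 <= i < s.+1) lamt i).
Local Notation lamt_block := (fun i => lamt (s + i)%N).

Lemma expansion_elsym_block N k : (N <= m)%N -> (k <= m)%N ->
  has_expansion (e (s + N) (s + k)) (S (s + k)) (P * elsym N lamt_block k).
Proof.
elim: N k => [|N IH] [|k] Nm km.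
- by rewrite !addn0 elsym0 mulr1; apply: expansion_elsym_diag; lia.
- rewrite elsym_eq0 // mulr0; apply/has_expansion0/(eq_bigO_pow _ (bigO_pow0 _ _)).
  by move=> eps; rewrite elsym_eq0 //; lia.
- have := IH 0%N (ltnW Nm) km; rewrite !addn0 !elsym0 !mulr1 addnS.
  apply: expansion_elsym_stable; first lia.
  by rewrite -addnS L_block //; lia.
have LNk : L (s + N).+1 = L (s + k).+1 by rewrite -!addnS !L_block //; lia.
have ea := IH k.+1 (ltnW Nm) km; rewrite addnS in ea.
have Nn : (s + N < n)%N by lia.
rewrite elsymS /= mulrDr mulrCA !addnS.
exact: expansion_elsym_step Nn LNk ea (IH k (ltnW Nm) (ltnW km)).
Qed.

Lemma leading_coef_elsym_block (et : nat -> R) k :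
  (forall j, (1 <= j <= n)%N -> has_expansion (e n j) (S j) (et j)) ->
  (s + m)%N = n \/ (L (s + m) < L (s + m).+1)%N ->
  (k <= m)%N -> (0 < s + k)%N -> et (s + k)%N = P * elsym m lamt_block k.
Proof.
move=> et_expansion L_block_right km sk0.
have eb := expansion_elsym_block (leqnn m) km.
have en : has_expansion (e n (s + k)) (S (s + k)) (P * elsym m lamt_block k).
  case: L_block_right => [<- //|Lsm].
  rewrite -(subnKC block_le); apply: expansion_elsym_extend eb; first by rewrite subnKC.
  by right; apply: leq_ltn_trans Lsm; apply: L_mono; lia.
by apply: has_expansion_unique (et_expansion _ _) en; lia.
Qed.

End Block.

End ElsymExpansions.

Theorem lemma3p4 (R : realType) (n : nat) (lam : nat -> R -> R) (L : nat -> nat)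
  (lt : nat -> R) (et : nat -> R) (s m : nat)
  (hL : forall i j, (1 <= i)%N -> (i <= j)%N -> (j <= n)%N -> (L i <= L j)%N)
  (hlam : forall k, (1 <= k <= n)%N -> has_expansion (lam k) (L k) (lt k))
  (he : forall j, (1 <= j <= n)%N ->
     has_expansion (fun eps => elsym n (fun i => lam i eps) j)
                   (\sum_(1 <= i < j.+1) L i)%N (et j))
  (hm : (1 <= m)%N) (hsm : (m <= n - s)%N)
  (hleft : s = 0%N \/ (L s < L s.+1)%N)
  (hmid : forall i, (1 <= i <= m)%N -> L (s + i)%N = L s.+1)
  (hright : (s + m)%N = n \/ (L (s + m)%N < L (s + m).+1)%N) :
  (forall k, (1 <= k <= m)%N ->
     (s = 0%N -> et (s + k)%N = elsym m (fun i => lt (s + i)%N) k) /\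
     ((0 < s)%N ->
        et (s + k)%N = (\prod_(1 <= i < s.+1) lt i) * elsym m (fun i => lt (s + i)%N) k /\
        (\prod_(1 <= i < s.+1) lt i) * elsym m (fun i => lt (s + i)%N) k
          = et s * elsym m (fun i => lt (s + i)%N) k)) /\
  ((1 < s)%N -> et s != 0 ->
     (forall k, (1 <= k <= m)%N ->
        elsym m (fun i => lt (s + i)%N) k = et (s + k)%N / et s) /\
     \sum_(j < m.+1) ((-1) ^+ j * et (s + j)%N) *: 'X^(m - j)
       = et s *: \prod_(i < m) ('X - (lt (s + i.+1)%N)%:P)).
Proof.
have block_le : (s + m <= n)%N by lia.
pose P := \prod_(1 <= i < s.+1) lt i.
have et_block k : (k <= m)%N -> (0 < s + k)%N ->
    et (s + k)%N = P * elsym m (fun i => lt (s + i)%N) k.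
  exact: (leading_coef_elsym_block hL hlam block_le hleft hmid he hright).
have et_s : (0 < s)%N -> et s = P.
  by move=> s0; rewrite -[s]addn0 et_block ?addn0 // elsym0 mulr1.
split=> [k /andP[k1 km]|s1 ets0].
  split=> [s0|s0]; last by rewrite et_block ?et_s ?addn_gt0 ?k1 ?orbT.
  by rewrite et_block ?addn_gt0 ?k1 ?orbT // /P s0 big_geq // mul1r.
have s0 : (0 < s)%N by apply: ltnW.
rewrite et_s // in ets0; split=> [k /andP[k1 km]|].
  by rewrite et_block ?addn_gt0 ?s0 // et_s // [P * _]mulrC mulfK.
rewrite (prod_XsubC_elsym m (fun i => lt (s + i)%N)) scaler_sumr.
apply: eq_bigr => -[j /= jm] _; rewrite scalerA et_block ?addn_gt0 ?s0 // et_s //.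
by congr (_ *: _); ring.
Qed.
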